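(* Let $q$ be a prime power, $g,s\ge 1$ integers, $V=\mathrm{GF}(q^g)^s$ regarded as a $gs$-dimensional $\mathrm{GF}(q)$-vector space, and let $1\le k\le s$. Consider the action of $\mathrm{SL}(s,q^g)$ on the set $\mathcal{F}_k$ of fat $k$-dimensional $\mathrm{GF}(q)$-subspaces of $V$ given by $U\mapsto \{xA: x\in U\}$ for $A\in\mathrm{SL}(s,q^g)$ (scalar matrices with entries in $\mathrm{GF}(q)^*$ act trivially, so this is the action of $\mathrm{SL}(s,q^g)/\mathrm{GF}(q)^*$). If $k<s$, this action is transitive on $\mathcal{F}_k$. If $k=s$, $\mathcal{F}_s$ splits into exactly $\frac{q^g-1}{q-1}$ orbits, all of the same size.
   Context: A $\mathrm{GF}(q)$-subspace $U\le V$ is fat if $\dim_{\mathrm{GF}(q^g)}\langle U\rangle_{\mathrm{GF}(q^g)}=\dim_{\mathrm{GF}(q)}U$, i.e. some (equivalently every) $\mathrm{GF}(q)$-basis of $U$ is linearly independent over $\mathrm{GF}(q^g)$. Vectors of $V$ are row vectors and matrices act by right multiplication. *)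

From HB Require Import structures.
From mathcomp Require Import all_boot all_order all_algebra all_field.
Set Implicit Arguments. Unset Strict Implicit. Unset Printing Implicit Defensive.
Import GRing.Theory.
Local Open Scope ring_scope.

(* GF(q) is modelled by a finite field F, GF(q^g) by a finite field L, with the
   embedding f : F -> L (a ring morphism, hence injective). V = L^s is 'rV[L]_s. *)
Section Fat.
Variables (F L : finFieldType) (f : {rmorphism F -> L}) (s : nat).

Definition Fspan k (B : 'M[L]_(k, s)) : {set 'rV[L]_s} :=
  [set map_mx f c *m B | c : 'rV[F]_k].

Definition Ffree k (B : 'M[L]_(k, s)) : bool :=
  [forall c : 'rV[F]_k, (map_mx f c *m B == 0) ==> (c == 0)].

(* U is a fat k-dimensional GF(q)-subspace: it has a GF(q)-basis B of size k
   and the GF(q^g)-span of U (= row space of B) has dimension k. *)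
Definition fat_subspace k (U : {set 'rV[L]_s}) : bool :=
  [exists B : 'M[L]_(k, s), [&& Ffree B, U == Fspan B & \rank B == k]].

Definition fat_set k : {set {set 'rV[L]_s}} := [set U | fat_subspace k U].

Definition mx_image (U : {set 'rV[L]_s}) (A : 'M[L]_s) : {set 'rV[L]_s} :=
  [set x *m A | x in U].

Definition SL_orbit (U : {set 'rV[L]_s}) : {set {set 'rV[L]_s}} :=
  [set mx_image U A | A in [set A : 'M[L]_s | \det A == 1]].

End Fat.

From mathcomp Require Import all_boot all_order all_algebra all_field.
From mathcomp Require Import ring.
Set Implicit Arguments. Unset Strict Implicit. Unset Printing Implicit Defensive.
Import GRing.Theory.
Local Open Scope ring_scope.

(* A fat k-subspace is the GF(q)-span of a k x s matrix B of full rank over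
   GF(q^g), and B is determined by the subspace up to a left factor in GL(k, q).
   For k < s, full-rank matrices complete to invertible ones whose last rows
   can absorb any determinant, so SL(s, q^g) acts transitively.  For k = s,
   the span of C lies in the SL-orbit of the span of B iff det B / det C lies
   in the image of GF(q)^*; hence the orbits are indexed by the cosets of
   GF(q)^* in GF(q^g)^*.  They have equal sizes because GL(s, q^g) permutes
   them, SL(s, q^g) being normal in GL(s, q^g). *)

Definition dilation_mx (R : nzRingType) n (a : R) : 'M[R]_n :=
  diag_mx (\row_(i < n) if i == 0 :> nat then a else 1).

Lemma det_dilation_mx (R : comNzRingType) n (a : R) :
  (0 < n)%N -> \det (dilation_mx n a) = a.
Proof.
by case: n => // n _; rewrite det_diag big_ord_recl big1 ?mulr1 => [|i _]; rewrite mxE.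
Qed.

Lemma dilation_mx_unit (K : fieldType) n (a : K) :
  (0 < n)%N -> a != 0 -> dilation_mx n a \in unitmx.
Proof. by move=> n0 a0; rewrite unitmxE det_dilation_mx // unitfE. Qed.

Lemma row_free_completion (K : fieldType) k n (B : 'M[K]_(k, k + n)) :
  row_free B -> exists2 P : 'M_(k + n), P \in unitmx & usubmx P = B.
Proof.
move=> /eqP rB; exists (block_mx (col_ebase B) 0 0 1%:M *m row_ebase B).
  rewrite unitmx_mul row_ebase_unit andbT unitmxE det_ublock det1 mulr1.
  by rewrite -unitmxE col_ebase_unit.
rewrite -mul_usub_mx block_mxEv col_mxKu -[RHS]mulmx_ebase rB.
by rewrite pid_mx_row mul_mx_row mulmx1 mulmx0.
Qed.

Lemma SL_transitive_row_free (K : fieldType) k s (B C : 'M[K]_(k, s)) :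
  (k < s)%N -> row_free B -> row_free C -> exists A, \det A = 1 /\ B *m A = C.
Proof.
move=> lt_ks; have [n def_s] : exists n, s = (k + n.+1)%N.
  by exists (s - k.+1)%N; rewrite addnS -addSn subnKC.
subst s => /row_free_completion [P uP <-] /row_free_completion [Q uQ <-].
have detP : \det P != 0 by rewrite -unitfE -unitmxE.
have detQ : \det Q != 0 by rewrite -unitfE -unitmxE.
pose D : 'M_(k + n.+1) := block_mx 1%:M 0 0 (dilation_mx n.+1 (\det P / \det Q)).
exists (invmx P *m (D *m Q)); split.
  rewrite det_mulmx det_inv det_mulmx det_ublock det1 mul1r det_dilation_mx //.
  by field; apply/andP.
rewrite mul_usub_mx mulmxA mulmxV // mul1mx -mul_usub_mx /D block_mxEv col_mxKu.
by rewrite -{1}(vsubmxK Q) mul_row_col mul1mx mul0mx addr0.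
Qed.

Lemma card_imset_uniform_fibres (T R : finType) (h : T -> R) (D : {set T}) n :
  {in D, forall x, #|[set y in D | h y == h x]| = n} -> (#|h @: D| * n)%N = #|D|.
Proof.
move=> fibre_n; rewrite -[RHS]sum1_card (partition_big_imset h) -sum_nat_const.
apply: eq_bigr => _ /imsetP [x Dx ->]; rewrite -(fibre_n x Dx) sum1_card.
by apply: eq_card => y; rewrite inE.
Qed.

Section FatSubspaces.
Variables (F L : finFieldType) (f : {rmorphism F -> L}).

Lemma mx_imageM s (X : {set 'rV[L]_s}) A B :
  mx_image (mx_image X A) B = mx_image X (A *m B).
Proof. by rewrite /mx_image -imset_comp; apply: eq_imset => x; rewrite /= mulmxA. Qed.

Lemma mx_image1 s (X : {set 'rV[L]_s}) : mx_image X 1%:M = X.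
Proof. by rewrite /mx_image (eq_imset (g := id)) ?imset_id // => x; rewrite mulmx1. Qed.

Lemma mx_image_Fspan s k (B : 'M[L]_(k, s)) A :
  mx_image (Fspan f B) A = Fspan f (B *m A).
Proof. by rewrite /mx_image -imset_comp; apply: eq_imset => c; rewrite /= mulmxA. Qed.

Lemma Fspan_mul_unit s k (M : 'M[F]_k) (C : 'M[L]_(k, s)) :
  M \in unitmx -> Fspan f (map_mx f M *m C) = Fspan f C.
Proof.
move=> uM; apply/setP => x; apply/imsetP/imsetP => [[c _ ->] | [c _ ->]].
  by exists (c *m M); rewrite // map_mxM mulmxA.
exists (c *m invmx M) => //.
by rewrite mulmxA -map_mxM mulmxKV.
Qed.

Lemma subset_Fspan_mul s m k (B : 'M[L]_(m, s)) (C : 'M[L]_(k, s)) :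
  Fspan f B \subset Fspan f C -> exists M : 'M[F]_(m, k), B = map_mx f M *m C.
Proof.
move=> /subsetP sBC.
have rowBC i : exists c : 'rV[F]_k, row i B = map_mx f c *m C.
  have /sBC /imsetP [c _ ->] : row i B \in Fspan f B.
    by apply/imsetP; exists (delta_mx 0 i); rewrite // map_delta_mx -rowE.
  by exists c.
have [c Bc] := fin_all_exists rowBC.
exists (\matrix_i c i); apply/row_matrixP => i.
by rewrite Bc row_mul -map_row rowK.
Qed.

Lemma fat_setP s k (U : {set 'rV[L]_s}) :
  reflect (exists2 B : 'M[L]_(k, s), row_free B & U = Fspan f B)
          (U \in fat_set f s k).
Proof.
rewrite inE; apply: (iffP existsP) => [[B /and3P [_ /eqP -> fB]] | [B fB ->]].
  by exists B.
exists B; apply/and3P; split => //; apply/forallP => c; apply/implyP.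
move=> /eqP; rewrite -(mul0mx _ B) => /(row_free_inj fB).
by rewrite -(map_mx0 f) => /map_mx_inj ->.
Qed.

Lemma fat_set_unitP s (U : {set 'rV[L]_s}) :
  reflect (exists2 B : 'M[L]_s, B \in unitmx & U = Fspan f B) (U \in fat_set f s s).
Proof.
by apply: (iffP (fat_setP _ _)) => [] [B uB ->]; exists B; rewrite ?row_free_unit in uB *.
Qed.

Lemma SL_orbitP s (X Y : {set 'rV[L]_s}) :
  reflect (exists A, \det A = 1 /\ Y = mx_image X A) (Y \in SL_orbit X).
Proof.
apply: (iffP imsetP) => [[A] | [A [dA ->]]].
  by rewrite inE => /eqP dA ->; exists A.
by exists A; rewrite // inE dA.
Qed.

Lemma SL_orbit_refl s (X : {set 'rV[L]_s}) : X \in SL_orbit X.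
Proof. by apply/SL_orbitP; exists 1%:M; rewrite det1 mx_image1. Qed.

Lemma SL_orbit_conj s (X : {set 'rV[L]_s}) T : T \in unitmx ->
  SL_orbit (mx_image X T) = [set mx_image Y T | Y in SL_orbit X].
Proof.
move=> uT; have detT : \det T \is a GRing.unit by rewrite -unitmxE.
apply/setP => Z; apply/SL_orbitP/imsetP => [[A [dA ->]] | [Y /SL_orbitP [A [dA ->]] ->]].
  exists (mx_image X (T *m A *m invmx T)).
    apply/SL_orbitP; exists (T *m A *m invmx T); split => //.
    by rewrite !det_mulmx det_inv dA mulr1 mulrV.
  by rewrite !mx_imageM mulmxKV.
exists (invmx T *m A *m T); split.
  by rewrite !det_mulmx det_inv dA mulr1 mulVr.
by rewrite !mx_imageM !mulmxA mulmxV // mul1mx.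
Qed.

Lemma card_SL_orbit_mx_image s (X : {set 'rV[L]_s}) T :
  T \in unitmx -> #|SL_orbit (mx_image X T)| = #|SL_orbit X|.
Proof.
move=> uT; rewrite SL_orbit_conj // card_imset //.
apply: (can_inj (g := fun Y => mx_image Y (invmx T))) => Y.
by rewrite mx_imageM mulmxV ?mx_image1.
Qed.

Lemma SL_orbit_mx_image s (X : {set 'rV[L]_s}) A :
  \det A = 1 -> SL_orbit (mx_image X A) = SL_orbit X.
Proof.
move=> dA; have uA : A \in unitmx by rewrite unitmxE dA unitr1.
apply/eqP; rewrite eq_sym eqEcard card_SL_orbit_mx_image // leqnn andbT.
apply/subsetP => _ /SL_orbitP [B [dB ->]]; apply/SL_orbitP.
exists (invmx A *m B); rewrite det_mulmx det_inv dA dB invr1 mulr1 mx_imageM.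
by rewrite mulKVmx.
Qed.

Lemma eq_SL_orbit s (X Y : {set 'rV[L]_s}) :
  (SL_orbit X == SL_orbit Y) = (Y \in SL_orbit X).
Proof.
apply/eqP/idP => [-> | /SL_orbitP [A [dA ->]]]; first exact: SL_orbit_refl.
by rewrite SL_orbit_mx_image.
Qed.

Lemma mem_SL_orbit_Fspan s (B C : 'M[L]_s) :
  (0 < s)%N -> B \in unitmx -> C \in unitmx ->
  (Fspan f C \in SL_orbit (Fspan f B)) = [exists c : F, \det B == f c * \det C].
Proof.
move=> s0 uB uC; apply/SL_orbitP/existsP => [[A [dA]] | [c /eqP dB]].
  rewrite mx_image_Fspan => /esym /eqP; rewrite eqEsubset => /andP [sBC _].
  have [M BAM] := subset_Fspan_mul sBC; exists (\det M).
  by rewrite -det_map_mx -det_mulmx -BAM det_mulmx dA mulr1.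
have detB : \det B != 0 by rewrite -unitfE -unitmxE.
have detC : \det C != 0 by rewrite -unitfE -unitmxE.
have fc0 : f c != 0 by apply: contraNneq detB => fc0; rewrite dB fc0 mul0r.
have c0 : c != 0 by rewrite -(fmorph_eq0 f).
exists (invmx B *m map_mx f (dilation_mx s c) *m C); split.
  rewrite !det_mulmx det_map_mx det_dilation_mx // det_inv dB.
  by field; apply/andP.
rewrite mx_image_Fspan !mulmxA mulmxV // mul1mx Fspan_mul_unit //.
exact: dilation_mx_unit.
Qed.

Lemma card_SL_orbits_fat s : (0 < s)%N ->
  (#|[set SL_orbit U | U in fat_set f s s]| * #|F|.-1)%N = #|L|.-1.
Proof.
move=> s0; pose psi a := SL_orbit (Fspan f (dilation_mx s a)).
have eq_psi a b : a != 0 -> b != 0 -> (psi a == psi b) = [exists c, a == f c * b].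
  move=> a0 b0; rewrite eq_SL_orbit mem_SL_orbit_Fspan ?dilation_mx_unit //.
  by rewrite !det_dilation_mx.
have -> : [set SL_orbit U | U in fat_set f s s] = psi @: [set~ 0].
  apply/setP => O; apply/imsetP/imsetP => [[U /fat_set_unitP [B uB ->] ->] | [a]].
    have detB : \det B != 0 by rewrite -unitfE -unitmxE.
    exists (\det B); first by rewrite in_setC1.
    rewrite /psi; apply/eqP; rewrite eq_SL_orbit mem_SL_orbit_Fspan ?dilation_mx_unit //.
    by apply/existsP; exists 1; rewrite rmorph1 mul1r det_dilation_mx.
  rewrite in_setC1 => a0 ->; exists (Fspan f (dilation_mx s a)) => //.
  by apply/fat_set_unitP; exists (dilation_mx s a); rewrite ?dilation_mx_unit.
rewrite -(cardsC1 (0 : L)); apply: card_imset_uniform_fibres => a; rewrite in_setC1 => a0.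
have -> : [set b in [set~ 0] | psi b == psi a] = (fun c => f c * a) @: [set~ 0].
  apply/setP => b; rewrite !inE; apply/andP/imsetP => [[b0] | [c]].
    rewrite eq_psi // => /existsP [c /eqP def_b]; exists c => //.
    rewrite in_setC1 -(fmorph_eq0 f).
    by apply: contraNneq b0 => fc0; rewrite def_b fc0 mul0r.
  rewrite in_setC1 => c0 ->; have fca0 : f c * a != 0 by rewrite mulf_neq0 ?fmorph_eq0.
  by rewrite fca0 eq_psi //; split => //; apply/existsP; exists c.
by rewrite card_imset ?cardsC1 // => c d /(mulIf a0) /fmorph_inj.
Qed.

End FatSubspaces.
Unset Implicit Arguments.

Theorem lemma13 (F L : finFieldType) (f : {rmorphism F -> L}) (q g s k : nat) :
  #|F| = q -> #|L| = (q ^ g)%N -> (1 <= g)%N -> (1 <= s)%N ->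
  (1 <= k)%N -> (k <= s)%N ->
  ((k < s)%N ->
     forall U W, U \in fat_set f s k -> W \in fat_set f s k ->
       exists A : 'M[L]_s, \det A = 1 /\ mx_image U A = W) /\
  (k = s ->
     #|[set SL_orbit U | U in fat_set f s k]| = ((q ^ g - 1) %/ (q - 1))%N /\
     forall U W, U \in fat_set f s k -> W \in fat_set f s k ->
       #|SL_orbit U| = #|SL_orbit W|).
Proof.
move=> cardF cardL _ s_gt0 _ _; split.
  move=> lt_ks U W /fat_setP [B fB ->] /fat_setP [C fC ->].
  have [A [dA BAC]] := SL_transitive_row_free lt_ks fB fC.
  by exists A; rewrite mx_image_Fspan BAC.
move=> eq_ks; subst k; split.
  have q1_gt0 : (0 < q.-1)%N by rewrite -subn1 subn_gt0 -cardF card_finNzRing_gt1.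
  by rewrite !subn1 -cardL -(card_SL_orbits_fat f s_gt0) cardF mulnK.
move=> U W /fat_set_unitP [B uB ->] /fat_set_unitP [C uC ->].
rewrite -[C](mulKVmx uB) -mx_image_Fspan card_SL_orbit_mx_image //.
by rewrite unitmx_mul unitmx_inv uB uC.
Qed.
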